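(* Consider the downlink clustered NOMA model and the problems $\mathcal{P}_1'$ and $\mathcal{P}_2'$ with Lagrangians $f$ and $g$ described in the context. Fix a precoder $\mathbf{P}^\star$, and choose the weights in $\mathcal{P}_2'$ as $$b_{k,i\to l}=\frac{1}{\varepsilon^{mmse}_{k,i\to l}}\quad\text{(evaluated at } \mathbf{P}^\star\text{)},\qquad 1\le l\le i\le L,\ 1\le k\le K,$$ and the thresholds as $\xi^{th}_{k,l}=1-R^{th}_{k,l}$. Then $\xi^{mmse}_{k,i\to l}=1-R_{k,i\to l}$ at $\mathbf{P}^\star$ for all $k$ and all $1\le l\le i\le L$. Moreover, $(\mathbf{P}^\star,\{R^\star_{k,l}\},c^\star,\mu,\kappa,\psi,\lambda)$ satisfies the KKT conditions of $\mathcal{P}_1'$ if and only if $(\mathbf{P}^\star,\{\xi^\star_{k,l}=1-R^\star_{k,l}\},\bar c^\star=L-c^\star,\bar\mu=\mu,\bar\kappa=\kappa,\bar\psi=\psi,\bar\lambda=\lambda)$ satisfies the KKT conditions of $\mathcal{P}_2'$. Consequently, the optimal precoders of the max-min fair sum rate problem $\mathcal{P}_1'$ and of the min-max fair weighted MMSE problem $\mathcal{P}_2'$ coincide at the optimal solution point.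
   Context: A base station with $M$ antennas serves $K$ clusters of $L$ single-antenna users each. User $i$ of cluster $k$ has channel row vector $\mathbf{h}_{k,i}\in\mathbb{C}^{1\times M}$. Power fractions satisfy $\alpha_{k,l}>0$, $\sum_{l=1}^L\alpha_{k,l}=1$. The precoder is $\mathbf{P}=[\mathbf{p}_1,\dots,\mathbf{p}_K]\in\mathbb{C}^{M\times K}$ with total power budget $E_{tx}>0$. For $1\le l\le i\le L$ define $r_{k,i\to l}=\sum_{j=l+1}^{L}\alpha_{k,j}|\mathbf{h}_{k,i}\mathbf{p}_k|^2+\sum_{t\ne k}|\mathbf{h}_{k,i}\mathbf{p}_t|^2+1$, $R_{k,i\to l}=\log\big(1+\alpha_{k,l}|\mathbf{h}_{k,i}\mathbf{p}_k|^2 r_{k,i\to l}^{-1}\big)$, $\varepsilon^{mmse}_{k,i\to l}=\big(\alpha_{k,l}^{-1}+|\mathbf{h}_{k,i}\mathbf{p}_k|^2 r_{k,i\to l}^{-1}\big)^{-1}$ (so that $R_{k,i\to l}=\log(\alpha_{k,l}/\varepsilon^{mmse}_{k,i\to l})$), and, for given weights $b_{k,i\to l}>0$, $\xi^{mmse}_{k,i\to l}=b_{k,i\to l}\varepsilon^{mmse}_{k,i\to l}-\log(\alpha_{k,l}b_{k,i\to l})$. Problem $\mathcal{P}_1'$: maximize $c$ over $\mathbf{P}$, $\{R_{k,l}\}$, $c$ subject to $c\le\sum_{l=1}^L R_{k,l}$ for all $k$; $R_{k,l}\le R_{k,i\to l}$ for all $k$ and $l\le i\le L$; $R^{th}_{k,l}\le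 R_{k,l}$ for all $k,l$ (given thresholds $R^{th}_{k,l}\ge0$); $\mathrm{Tr}(\mathbf{P}\mathbf{P}^H)\le E_{tx}$. Its Lagrangian is $f=-c+\sum_k\mu_k c-\sum_{k,l}\mu_k R_{k,l}+\sum_{k,l}\kappa_{k,l}(R^{th}_{k,l}-R_{k,l})+\lambda(\mathrm{Tr}(\mathbf{P}\mathbf{P}^H)-E_{tx})+\sum_{k}\sum_{l=1}^L\sum_{i=l}^L\psi_{k,i\to l}(R_{k,l}-R_{k,i\to l})$. Problem $\mathcal{P}_2'$ (weights $b_{k,i\to l}>0$ treated as fixed constants): minimize $\bar c$ over $\mathbf{P}$, $\{\xi_{k,l}\}$, $\bar c$ subject to $\sum_{l=1}^L\xi_{k,l}\le\bar c$ for all $k$; $\xi^{mmse}_{k,i\to l}\le\xi_{k,l}$ for all $k$ and $l\le i\le L$; $\xi_{k,l}\le\xi^{th}_{k,l}$ for all $k,l$; $\mathrm{Tr}(\mathbf{P}\mathbf{P}^H)\le E_{tx}$. Its Lagrangian is $g=\bar c-\sum_k\bar\mu_k\bar c+\sum_{k,l}\bar\mu_k\xi_{k,l}+\sum_{k,l}\bar\kappa_{k,l}(\xi_{k,l}-\xi^{th}_{k,l})+\bar\lambda(\mathrm{Tr}(\mathbf{P}\mathbf{P}^H)-E_{tx})+\sum_k\sum_{l=1}^L\sum_{i=l}^L\bar\psi_{k,i\to l}(\xi^{mmse}_{k,i\to l}-\xi_{k,l})$. KKT conditions: stationarity of the Lagrangian with respect to each $\mathbf{p}_k$ (complex gradient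 taken with respect to $\mathbf{p}_k^*$), with respect to the auxiliary scalar ($c$ or $\bar c$) and with respect to each $R_{k,l}$ (resp. $\xi_{k,l}$); primal feasibility; nonnegativity of all multipliers; and complementary slackness for every constraint. *)

From Stdlib Require Import Reals Lra Arith Bool.
From Coquelicot Require Import Coquelicot.
Open Scope R_scope.

(* Indices are 0-based: antennas m < M, clusters k < K, users i < L.
   User i of cluster k is "user i+1" of the paper; the ordering l <= i is kept. *)

Fixpoint sumR (n : nat) (f : nat -> R) : R :=
  match n with O => 0 | S n' => sumR n' f + f n' end.
Fixpoint sumC (n : nat) (f : nat -> C) : C :=
  match n with O => RtoC 0 | S n' => Cplus (sumC n' f) (f n') end.

Definition normsq (z : C) : R := (Re z) ^ 2 + (Im z) ^ 2.

(* channel h k i : row vector, entry m = h k i m;  precoder P m k = (P)_{m,k} *)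
Definition Chan := nat -> nat -> nat -> C.
Definition Precoder := nat -> nat -> C.

Definition gain (M : nat) (h : Chan) (P : Precoder) (k i t : nat) : R :=
  normsq (sumC M (fun m => Cmult (h k i m) (P m t))).

Definition rint (M K L : nat) (h : Chan) (alpha : nat -> nat -> R) (P : Precoder)
  (k i l : nat) : R :=
  sumR L (fun j => if Nat.ltb l j then alpha k j else 0) * gain M h P k i k
  + sumR K (fun t => if Nat.eqb t k then 0 else gain M h P k i t) + 1.

Definition rate (M K L : nat) (h : Chan) (alpha : nat -> nat -> R) (P : Precoder)
  (k i l : nat) : R :=
  ln (1 + alpha k l * gain M h P k i k / rint M K L h alpha P k i l).

Definition eps_mmse (M K L : nat) (h : Chan) (alpha : nat -> nat -> R) (P : Precoder)
  (k i l : nat) : R :=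
  / (/ alpha k l + gain M h P k i k / rint M K L h alpha P k i l).

Definition xi_mmse (M K L : nat) (h : Chan) (alpha : nat -> nat -> R)
  (b : nat -> nat -> nat -> R) (P : Precoder) (k i l : nat) : R :=
  b k i l * eps_mmse M K L h alpha P k i l - ln (alpha k l * b k i l).

Definition trPPH (M K : nat) (P : Precoder) : R :=
  sumR M (fun m => sumR K (fun k => normsq (P m k))).

Definition sum_tri (L : nat) (F : nat -> nat -> R) : R :=
  sumR L (fun l => sumR L (fun i => if Nat.leb l i then F i l else 0)).

Definition lagr_f (M K L : nat) (h : Chan) (alpha : nat -> nat -> R) (Etx : R)
  (Rth : nat -> nat -> R)
  (P : Precoder) (Rv : nat -> nat -> R) (c : R)
  (mu : nat -> R) (kappa : nat -> nat -> R) (psi : nat -> nat -> nat -> R)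
  (lambda : R) : R :=
  - c + sumR K (fun k => mu k * c)
  - sumR K (fun k => sumR L (fun l => mu k * Rv k l))
  + sumR K (fun k => sumR L (fun l => kappa k l * (Rth k l - Rv k l)))
  + lambda * (trPPH M K P - Etx)
  + sumR K (fun k => sum_tri L (fun i l =>
        psi k i l * (Rv k l - rate M K L h alpha P k i l))).

Definition lagr_g (M K L : nat) (h : Chan) (alpha : nat -> nat -> R) (Etx : R)
  (b : nat -> nat -> nat -> R) (xith : nat -> nat -> R)
  (P : Precoder) (xi : nat -> nat -> R) (cb : R)
  (mub : nat -> R) (kappab : nat -> nat -> R) (psib : nat -> nat -> nat -> R)
  (lambdab : R) : R :=
  cb - sumR K (fun k => mub k * cb)
  + sumR K (fun k => sumR L (fun l => mub k * xi k l))
  + sumR K (fun k => sumR L (fun l => kappab k l * (xi k l - xith k l)))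
  + lambdab * (trPPH M K P - Etx)
  + sumR K (fun k => sum_tri L (fun i l =>
        psib k i l * (xi_mmse M K L h alpha b P k i l - xi k l))).

Definition pertP (P : Precoder) (m k : nat) (z : C) : Precoder :=
  fun m' k' => if andb (Nat.eqb m' m) (Nat.eqb k' k) then Cplus (P m' k') z else P m' k'.

(* Wirtinger (complex) derivative of a real function F of P w.r.t. conj(P_{m,k}):
   dF/dP*_{mk} = (1/2) (dF/dRe P_{mk} + i dF/dIm P_{mk}).  The gradient
   w.r.t. p_k^* is the vector of these entries, m < M. *)
Definition dconj (F : Precoder -> R) (P : Precoder) (m k : nat) : C :=
  (Derive (fun t => F (pertP P m k (t, 0))) 0 / 2,
   Derive (fun t => F (pertP P m k (0, t))) 0 / 2).

Definition upd2 (X : nat -> nat -> R) (k l : nat) (x : R) : nat -> nat -> R :=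
  fun k' l' => if andb (Nat.eqb k' k) (Nat.eqb l' l) then x else X k' l'.

Definition KKT1 (M K L : nat) (h : Chan) (alpha : nat -> nat -> R) (Etx : R)
  (Rth : nat -> nat -> R)
  (P : Precoder) (Rv : nat -> nat -> R) (c : R)
  (mu : nat -> R) (kappa : nat -> nat -> R) (psi : nat -> nat -> nat -> R)
  (lambda : R) : Prop :=
  let F := fun P' Rv' c' => lagr_f M K L h alpha Etx Rth P' Rv' c' mu kappa psi lambda in
  (forall m k, (m < M)%nat -> (k < K)%nat -> dconj (fun P' => F P' Rv c) P m k = RtoC 0) /\
  Derive (fun c' => F P Rv c') c = 0 /\
  (forall k l, (k < K)%nat -> (l < L)%nat ->
     Derive (fun x => F P (upd2 Rv k l x) c) (Rv k l) = 0) /\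
  (forall k, (k < K)%nat -> c <= sumR L (fun l => Rv k l)) /\
  (forall k i l, (k < K)%nat -> (l <= i)%nat -> (i < L)%nat ->
     Rv k l <= rate M K L h alpha P k i l) /\
  (forall k l, (k < K)%nat -> (l < L)%nat -> Rth k l <= Rv k l) /\
  trPPH M K P <= Etx /\
  (forall k, (k < K)%nat -> 0 <= mu k) /\
  (forall k l, (k < K)%nat -> (l < L)%nat -> 0 <= kappa k l) /\
  (forall k i l, (k < K)%nat -> (l <= i)%nat -> (i < L)%nat -> 0 <= psi k i l) /\
  0 <= lambda /\
  (forall k, (k < K)%nat -> mu k * (c - sumR L (fun l => Rv k l)) = 0) /\
  (forall k i l, (k < K)%nat -> (l <= i)%nat -> (i < L)%nat ->
     psi k i l * (Rv k l - rate M K L h alpha P k i l) = 0) /\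
  (forall k l, (k < K)%nat -> (l < L)%nat -> kappa k l * (Rth k l - Rv k l) = 0) /\
  lambda * (trPPH M K P - Etx) = 0.

Definition KKT2 (M K L : nat) (h : Chan) (alpha : nat -> nat -> R) (Etx : R)
  (b : nat -> nat -> nat -> R) (xith : nat -> nat -> R)
  (P : Precoder) (xi : nat -> nat -> R) (cb : R)
  (mub : nat -> R) (kappab : nat -> nat -> R) (psib : nat -> nat -> nat -> R)
  (lambdab : R) : Prop :=
  let G := fun P' xi' cb' => lagr_g M K L h alpha Etx b xith P' xi' cb' mub kappab psib lambdab in
  (forall m k, (m < M)%nat -> (k < K)%nat -> dconj (fun P' => G P' xi cb) P m k = RtoC 0) /\
  Derive (fun c' => G P xi c') cb = 0 /\
  (forall k l, (k < K)%nat -> (l < L)%nat ->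
     Derive (fun x => G P (upd2 xi k l x) cb) (xi k l) = 0) /\
  (forall k, (k < K)%nat -> sumR L (fun l => xi k l) <= cb) /\
  (forall k i l, (k < K)%nat -> (l <= i)%nat -> (i < L)%nat ->
     xi_mmse M K L h alpha b P k i l <= xi k l) /\
  (forall k l, (k < K)%nat -> (l < L)%nat -> xi k l <= xith k l) /\
  trPPH M K P <= Etx /\
  (forall k, (k < K)%nat -> 0 <= mub k) /\
  (forall k l, (k < K)%nat -> (l < L)%nat -> 0 <= kappab k l) /\
  (forall k i l, (k < K)%nat -> (l <= i)%nat -> (i < L)%nat -> 0 <= psib k i l) /\
  0 <= lambdab /\
  (forall k, (k < K)%nat -> mub k * (sumR L (fun l => xi k l) - cb) = 0) /\
  (forall k i l, (k < K)%nat -> (l <= i)%nat -> (i < L)%nat ->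
     psib k i l * (xi_mmse M K L h alpha b P k i l - xi k l) = 0) /\
  (forall k l, (k < K)%nat -> (l < L)%nat -> kappab k l * (xi k l - xith k l) = 0) /\
  lambdab * (trPPH M K P - Etx) = 0.

From Stdlib Require Import Reals Lra Lia FunctionalExtensionality.
From Coquelicot Require Import Coquelicot.
Open Scope R_scope.

(* Since
   R = ln (alpha / eps), the gap between a weighted-MMSE term and its rate
   counterpart is xi^mmse - (1 - R) = u - 1 - ln u with u = b eps(P).  As
   u - 1 - ln u has a double zero at u = 1, and u = 1 at Pstar, the gap vanishes
   at Pstar together with its derivative in every direction of P.  The
   substitution xi = 1 - R, cbar = L - c turns the Lagrangian g into
   f + L + (sum of psi-weighted gaps), so at Pstar the two Lagrangians have the
   same P-gradient and opposite derivatives in c and in R, while the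
   constraints and slackness conditions of the two problems correspond one to
   one. *)

Lemma sumR_ext n f g : (forall j, (j < n)%nat -> f j = g j) -> sumR n f = sumR n g.
Proof.
  induction n as [|n IH]; intros Hfg; simpl; auto.
  rewrite IH, Hfg; auto; intros; apply Hfg; lia.
Qed.

Lemma sumR_plus n f g : sumR n (fun j => f j + g j) = sumR n f + sumR n g.
Proof. induction n as [|n IH]; simpl; [ring | rewrite IH; ring]. Qed.

Lemma sumR_minus n f g : sumR n (fun j => f j - g j) = sumR n f - sumR n g.
Proof. induction n as [|n IH]; simpl; [ring | rewrite IH; ring]. Qed.

Lemma sumR_mult_r n c f : sumR n (fun j => f j * c) = sumR n f * c.
Proof. induction n as [|n IH]; simpl; [ring | rewrite IH; ring]. Qed.

Lemma sumR_const n c : sumR n (fun _ => c) = INR n * c.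
Proof. induction n as [|n IH]; simpl sumR; [simpl; ring | rewrite IH, S_INR; ring]. Qed.

Lemma sumR_ge0 n f : (forall j, (j < n)%nat -> 0 <= f j) -> 0 <= sumR n f.
Proof.
  induction n as [|n IH]; intros Hf; simpl; [lra|].
  assert (0 <= sumR n f) by (apply IH; intros; apply Hf; lia).
  assert (0 <= f n) by (apply Hf; lia).
  lra.
Qed.

Lemma sumR_one_minus n f : sumR n (fun j => 1 - f j) = INR n - sumR n f.
Proof. rewrite sumR_minus, sumR_const; ring. Qed.

Lemma sum_tri_plus n F G : sum_tri n (fun i l => F i l + G i l) = sum_tri n F + sum_tri n G.
Proof.
  unfold sum_tri; rewrite <- sumR_plus; apply sumR_ext; intros.
  rewrite <- sumR_plus; apply sumR_ext; intros.
  destruct (Nat.leb _ _); ring.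
Qed.

Lemma sumR_zero n f : (forall j, (j < n)%nat -> f j = 0) -> sumR n f = 0.
Proof. intros Hf; rewrite (sumR_ext n f (fun _ => 0)), sumR_const by auto; ring. Qed.

Lemma sum_tri_zero n F :
  (forall i l, (l <= i)%nat -> (i < n)%nat -> F i l = 0) -> sum_tri n F = 0.
Proof.
  intros HF; unfold sum_tri.
  apply sumR_zero; intros l _; apply sumR_zero; intros i Hi.
  destruct (Nat.leb l i) eqn:Eli; auto.
  apply HF, Hi; now apply Nat.leb_le.
Qed.

Lemma is_derive_sumR_0 n (F : nat -> R -> R) x :
  (forall j, (j < n)%nat -> is_derive (F j) x 0) ->
  is_derive (fun y => sumR n (fun j => F j y)) x 0.
Proof.
  induction n as [|n IH]; intros HF; simpl.
  - exact (is_derive_const 0 x).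
  - replace 0 with (plus 0 0) by (unfold plus; simpl; ring).
    apply (is_derive_plus (fun y => sumR n (fun j => F j y)) (F n));
      [apply IH; intros; apply HF | apply HF]; lia.
Qed.

Lemma ex_derive_sumR n (F : nat -> R -> R) x :
  (forall j, (j < n)%nat -> ex_derive (F j) x) ->
  ex_derive (fun y => sumR n (fun j => F j y)) x.
Proof.
  induction n as [|n IH]; intros HF; simpl.
  - apply ex_derive_const.
  - apply (ex_derive_plus (fun y => sumR n (fun j => F j y)) (F n));
      [apply IH; intros; apply HF | apply HF]; lia.
Qed.

Ltac ex_derive_poly := repeat match goal with
  | |- ex_derive (fun y => @?f y - @?g y) _ => apply (ex_derive_minus f g)
  | |- ex_derive (fun y => @?f y + @?g y) _ => apply (ex_derive_plus f g)
  | |- ex_derive (fun y => - @?f y) _ => apply (ex_derive_opp f)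
  | |- ex_derive (fun _ => _ * _) _ => apply ex_derive_mult
  | |- ex_derive (fun _ => sumR _ _) _ => apply ex_derive_sumR; intros ? ?
  | |- ex_derive (fun _ => if ?b then _ else _) _ => destruct b
  | |- ex_derive (fun y => y) _ => apply ex_derive_id
  | |- ex_derive (fun _ => ?a) _ => apply ex_derive_const
  end.

Lemma Derive_plus_flat (f d : R -> R) a x :
  ex_derive f x -> is_derive d x 0 -> Derive (fun t => f t + a + d t) x = Derive f x.
Proof.
  intros Hf Hd; apply is_derive_unique.
  replace (Derive f x) with (plus (plus (Derive f x) 0) 0) by (unfold plus; simpl; ring).
  apply (is_derive_plus (fun t => f t + a) d); auto.
  apply (is_derive_plus f (fun _ => a)); [now apply Derive_correct | exact (is_derive_const a x)].
Qed.

Lemma Derive_reflect (f : R -> R) a b x :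
  ex_derive f (a - x) -> Derive (fun y => f (a - y) + b) x = - Derive f (a - x).
Proof.
  intros Hf; apply is_derive_unique.
  auto_derive; auto.
  change (fun y => f y) with f; unfold Rminus; ring.
Qed.

Lemma is_derive_sub_ln_at_one (u : R -> R) x :
  ex_derive u x -> u x = 1 -> is_derive (fun t => u t - 1 - ln (u t)) x 0.
Proof. intros Hu Hu1; auto_derive; [repeat split; auto; lra | rewrite Hu1; field]. Qed.

Definition ex_derive_C (z : R -> C) x :=
  ex_derive (fun t => Re (z t)) x /\ ex_derive (fun t => Im (z t)) x.

Lemma ex_derive_C_sumC n (Z : nat -> R -> C) x :
  (forall j, (j < n)%nat -> ex_derive_C (Z j) x) ->
  ex_derive_C (fun t => sumC n (fun j => Z j t)) x.
Proof.
  induction n as [|n IH]; intros HZ; simpl.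
  - split; apply ex_derive_const.
  - destruct (IH (fun j Hj => HZ j ltac:(lia))) as [Hre Him].
    destruct (HZ n ltac:(lia)) as [Hre' Him'].
    unfold Cplus, Re, Im in *; split; simpl; ex_derive_poly; auto.
Qed.

Lemma ex_derive_C_mult_l c (z : R -> C) x :
  ex_derive_C z x -> ex_derive_C (fun t => Cmult c (z t)) x.
Proof.
  intros [Hre Him]; unfold Cmult, Re, Im in *; split; simpl; ex_derive_poly; auto.
Qed.

Lemma ex_derive_normsq (z : R -> C) x :
  ex_derive_C z x -> ex_derive (fun t => normsq (z t)) x.
Proof.
  intros [Hre Him]; unfold normsq.
  apply (ex_derive_plus (fun t => Re (z t) ^ 2) (fun t => Im (z t) ^ 2));
    apply ex_derive_pow; auto.
Qed.

Lemma pertP_0 P m k : pertP P m k (0, 0) = P.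
Proof.
  apply functional_extensionality; intro m'; apply functional_extensionality; intro k'.
  unfold pertP; destruct (andb _ _); auto.
  destruct (P m' k'); unfold Cplus; simpl; f_equal; ring.
Qed.

Section Model.

Variables (M K L : nat) (h : Chan) (alpha : nat -> nat -> R) (Etx : R)
  (Rth : nat -> nat -> R).
Hypothesis alpha_pos : forall k l, (k < K)%nat -> (l < L)%nat -> 0 < alpha k l.

Definition mmse_rate_gap b P k i l :=
  xi_mmse M K L h alpha b P k i l - (1 - rate M K L h alpha P k i l).

Definition gap_sum b psi P :=
  sumR K (fun k => sum_tri L (fun i l => psi k i l * mmse_rate_gap b P k i l)).

Lemma alpha_row_ge0 k : (k < K)%nat -> forall j, (j < L)%nat -> 0 <= alpha k j.
Proof. intros Hk j Hj; now apply Rlt_le, alpha_pos. Qed.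

Lemma gain_ge0 P k i t : 0 <= gain M h P k i t.
Proof. unfold gain, normsq; nra. Qed.

Lemma rint_ge1 P k i l :
  (forall j, (j < L)%nat -> 0 <= alpha k j) -> 1 <= rint M K L h alpha P k i l.
Proof.
  intros Ha; unfold rint.
  assert (0 <= sumR L (fun j => if Nat.ltb l j then alpha k j else 0)).
  { apply sumR_ge0; intros j Hj; destruct (Nat.ltb l j); auto; lra. }
  assert (0 <= sumR K (fun t => if Nat.eqb t k then 0 else gain M h P k i t)).
  { apply sumR_ge0; intros t _; destruct (Nat.eqb t k); [lra | apply gain_ge0]. }
  assert (0 <= gain M h P k i k) by apply gain_ge0.
  nra.
Qed.

Section Positivity.

Variables (k l : nat).
Hypothesis alpha_kl_pos : 0 < alpha k l.
Hypothesis alpha_k_ge0 : forall j, (j < L)%nat -> 0 <= alpha k j.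

Lemma gain_div_rint_ge0 P i : 0 <= gain M h P k i k / rint M K L h alpha P k i l.
Proof.
  assert (1 <= rint M K L h alpha P k i l) by now apply rint_ge1.
  apply Rdiv_le_0_compat; [apply gain_ge0 | lra].
Qed.

Lemma eps_mmse_pos P i : 0 < eps_mmse M K L h alpha P k i l.
Proof.
  assert (0 < / alpha k l) by now apply Rinv_0_lt_compat.
  assert (Hq := gain_div_rint_ge0 P i).
  apply Rinv_0_lt_compat; lra.
Qed.

Lemma rate_eps_mmse P i :
  rate M K L h alpha P k i l = ln (alpha k l / eps_mmse M K L h alpha P k i l).
Proof.
  assert (1 <= rint M K L h alpha P k i l) by now apply rint_ge1.
  unfold rate, eps_mmse; f_equal.
  unfold Rdiv at 2; rewrite Rinv_inv; field; lra.
Qed.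

Lemma mmse_rate_gap_eq b P i : 0 < b k i l ->
  mmse_rate_gap b P k i l = b k i l * eps_mmse M K L h alpha P k i l - 1
    - ln (b k i l * eps_mmse M K L h alpha P k i l).
Proof.
  intros Hb; assert (He := eps_mmse_pos P i).
  unfold mmse_rate_gap, xi_mmse; rewrite rate_eps_mmse.
  rewrite !ln_mult, ln_div; auto; lra.
Qed.

End Positivity.

Section Perturbation.

Variables (P : Precoder) (m0 k0 : nat) (z : R -> C) (x : R).
Hypothesis z_deriv : ex_derive_C z x.

Lemma ex_derive_C_pertP m t : ex_derive_C (fun s => pertP P m0 k0 (z s) m t) x.
Proof.
  destruct z_deriv as [Hre Him]; unfold pertP.
  destruct (andb _ _); unfold Cplus, Re, Im in *; split; simpl; ex_derive_poly; auto.
Qed.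

Lemma ex_derive_gain k i t : ex_derive (fun s => gain M h (pertP P m0 k0 (z s)) k i t) x.
Proof.
  apply ex_derive_normsq, ex_derive_C_sumC; intros.
  apply ex_derive_C_mult_l, ex_derive_C_pertP.
Qed.

Lemma ex_derive_rint k i l :
  ex_derive (fun s => rint M K L h alpha (pertP P m0 k0 (z s)) k i l) x.
Proof. unfold rint; ex_derive_poly; apply ex_derive_gain. Qed.

Lemma ex_derive_trPPH : ex_derive (fun s => trPPH M K (pertP P m0 k0 (z s))) x.
Proof.
  unfold trPPH; ex_derive_poly.
  apply (ex_derive_normsq (fun s => pertP P m0 k0 (z s) _ _)), ex_derive_C_pertP.
Qed.

Section Entry.

Variables (k i l : nat).
Hypothesis alpha_kl_pos : 0 < alpha k l.
Hypothesis alpha_k_ge0 : forall j, (j < L)%nat -> 0 <= alpha k j.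

Lemma ex_derive_rate : ex_derive (fun s => rate M K L h alpha (pertP P m0 k0 (z s)) k i l) x.
Proof.
  assert (Hr := rint_ge1 (pertP P m0 k0 (z x)) k i l alpha_k_ge0).
  assert (Hq := gain_div_rint_ge0 k l alpha_k_ge0 (pertP P m0 k0 (z x)) i).
  apply (ex_derive_comp ln (fun s => 1 + alpha k l * _ / _)).
  - eexists; apply is_derive_ln.
    assert (0 <= alpha k l * (gain M h (pertP P m0 k0 (z x)) k i k
                               / rint M K L h alpha (pertP P m0 k0 (z x)) k i l)) by nra.
    unfold Rdiv in *; lra.
  - ex_derive_poly; apply ex_derive_div;
      [ex_derive_poly; apply ex_derive_gain | apply ex_derive_rint | lra].
Qed.

Lemma ex_derive_eps_mmse :
  ex_derive (fun s => eps_mmse M K L h alpha (pertP P m0 k0 (z s)) k i l) x.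
Proof.
  assert (Hr := rint_ge1 (pertP P m0 k0 (z x)) k i l alpha_k_ge0).
  assert (Hq := gain_div_rint_ge0 k l alpha_k_ge0 (pertP P m0 k0 (z x)) i).
  assert (0 < / alpha k l) by now apply Rinv_0_lt_compat.
  apply ex_derive_inv; [| unfold Rdiv in *; lra].
  ex_derive_poly; apply ex_derive_div; [apply ex_derive_gain | apply ex_derive_rint | lra].
Qed.

Lemma is_derive_mmse_rate_gap : z x = (0, 0) ->
  is_derive (fun s => mmse_rate_gap (fun k i l => / eps_mmse M K L h alpha P k i l)
                                    (pertP P m0 k0 (z s)) k i l) x 0.
Proof.
  intros Hz.
  assert (He := eps_mmse_pos k l alpha_kl_pos alpha_k_ge0 P i).
  set (b0 := / eps_mmse M K L h alpha P k i l).
  apply (is_derive_ext (fun s => b0 * eps_mmse M K L h alpha (pertP P m0 k0 (z s)) k i l - 1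
                                 - ln (b0 * eps_mmse M K L h alpha (pertP P m0 k0 (z s)) k i l))).
  { intros s; symmetry; apply mmse_rate_gap_eq; auto; now apply Rinv_0_lt_compat. }
  apply is_derive_sub_ln_at_one.
  - apply ex_derive_scal, ex_derive_eps_mmse.
  - rewrite Hz, pertP_0; unfold b0; field; lra.
Qed.

End Entry.

Lemma ex_derive_lagr_f_pertP Rv c mu kappa psi lambda :
  ex_derive (fun s => lagr_f M K L h alpha Etx Rth (pertP P m0 k0 (z s)) Rv c
                             mu kappa psi lambda) x.
Proof.
  unfold lagr_f, sum_tri; ex_derive_poly.
  - apply ex_derive_trPPH.
  - apply ex_derive_rate; [apply alpha_pos | apply alpha_row_ge0]; assumption.
Qed.

Lemma is_derive_gap_sum psi : z x = (0, 0) ->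
  is_derive (fun s => gap_sum (fun k i l => / eps_mmse M K L h alpha P k i l) psi
                              (pertP P m0 k0 (z s))) x 0.
Proof.
  intros Hz; unfold gap_sum, sum_tri.
  apply is_derive_sumR_0; intros k Hk; apply is_derive_sumR_0; intros l Hl.
  apply is_derive_sumR_0; intros i Hi.
  destruct (Nat.leb l i); [| exact (is_derive_const 0 x)].
  replace 0 with (psi k i l * 0) by ring.
  apply is_derive_scal, is_derive_mmse_rate_gap; auto using alpha_row_ge0.
Qed.

End Perturbation.

Lemma lagr_g_substitution b P Rv c mu kappa psi lambda :
  lagr_g M K L h alpha Etx b (fun k l => 1 - Rth k l) P (fun k l => 1 - Rv k l) (INR L - c)
    mu kappa psi lambda
  = lagr_f M K L h alpha Etx Rth P Rv c mu kappa psi lambda + INR L + gap_sum b psi P.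
Proof.
  unfold lagr_g, lagr_f, gap_sum, mmse_rate_gap.
  rewrite !sumR_mult_r.
  assert (Hmu : sumR K (fun k => sumR L (fun l => mu k * (1 - Rv k l)))
              = sumR K mu * INR L - sumR K (fun k => sumR L (fun l => mu k * Rv k l))).
  { rewrite <- sumR_mult_r, <- sumR_minus; apply sumR_ext; intros k _.
    replace (mu k * INR L) with (sumR L (fun _ => mu k)) by (rewrite sumR_const; ring).
    rewrite <- sumR_minus; apply sumR_ext; intros; ring. }
  assert (Hkappa : sumR K (fun k => sumR L (fun l => kappa k l * (1 - Rv k l - (1 - Rth k l))))
                 = sumR K (fun k => sumR L (fun l => kappa k l * (Rth k l - Rv k l)))).
  { apply sumR_ext; intros; apply sumR_ext; intros; ring. }
  assert (Hpsi : sumR K (fun k => sum_tri L (fun i l =>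
                   psi k i l * (xi_mmse M K L h alpha b P k i l - (1 - Rv k l))))
    = sumR K (fun k => sum_tri L (fun i l => psi k i l * (Rv k l - rate M K L h alpha P k i l)))
      + sumR K (fun k => sum_tri L (fun i l =>
          psi k i l * (xi_mmse M K L h alpha b P k i l - (1 - rate M K L h alpha P k i l))))).
  { rewrite <- sumR_plus; apply sumR_ext; intros; rewrite <- sum_tri_plus.
    unfold sum_tri; apply sumR_ext; intros; apply sumR_ext; intros.
    destruct (Nat.leb _ _); ring. }
  rewrite Hmu, Hkappa, Hpsi; ring.
Qed.

Section Multipliers.

Variables (mu : nat -> R) (kappa : nat -> nat -> R) (psi : nat -> nat -> nat -> R)
  (lambda : R).

Local Notation Lf P Rv c := (lagr_f M K L h alpha Etx Rth P Rv c mu kappa psi lambda).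
Local Notation Lg b P xi cb :=
  (lagr_g M K L h alpha Etx b (fun k l => 1 - Rth k l) P xi cb mu kappa psi lambda).

Lemma KKT1_iff_KKT2 b P Rv c :
  (forall m k, dconj (fun P' => Lg b P' (fun k l => 1 - Rv k l) (INR L - c)) P m k
               = dconj (fun P' => Lf P' Rv c) P m k) ->
  Derive (fun cb => Lg b P (fun k l => 1 - Rv k l) cb) (INR L - c)
    = - Derive (fun c' => Lf P Rv c') c ->
  (forall k l, Derive (fun x => Lg b P (upd2 (fun k l => 1 - Rv k l) k l x) (INR L - c))
                      (1 - Rv k l)
               = - Derive (fun y => Lf P (upd2 Rv k l y) c) (Rv k l)) ->
  (forall k i l, (k < K)%nat -> (l <= i)%nat -> (i < L)%nat ->
     xi_mmse M K L h alpha b P k i l = 1 - rate M K L h alpha P k i l) ->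
  KKT1 M K L h alpha Etx Rth P Rv c mu kappa psi lambda <->
  KKT2 M K L h alpha Etx b (fun k l => 1 - Rth k l) P (fun k l => 1 - Rv k l) (INR L - c)
    mu kappa psi lambda.
Proof.
  intros HP Hc HRv Hxi; unfold KKT1, KKT2; cbv zeta beta.
  split; intros (H1 & H2 & H3 & H4 & H5 & H6 & H7 & H8 & H9 & H10 & H11 & H12 & H13 & H14 & H15);
    repeat split; auto.
  - intros m k Hm Hk; rewrite HP; auto.
  - rewrite Hc, H2; ring.
  - intros k l Hk Hl; rewrite HRv, H3; auto; ring.
  - intros k Hk; rewrite (sumR_one_minus L (fun l => Rv k l)); specialize (H4 k Hk); lra.
  - intros k i l Hk Hli Hi; rewrite Hxi; auto; specialize (H5 k i l Hk Hli Hi); lra.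
  - intros k l Hk Hl; specialize (H6 k l Hk Hl); lra.
  - intros k Hk; rewrite (sumR_one_minus L (fun l => Rv k l)), <- (H12 k Hk); ring.
  - intros k i l Hk Hli Hi; rewrite Hxi, <- (H13 k i l Hk Hli Hi); auto; ring.
  - intros k l Hk Hl; rewrite <- (H14 k l Hk Hl); ring.
  - intros m k Hm Hk; rewrite <- HP; auto.
  - rewrite Hc in H2; lra.
  - intros k l Hk Hl; specialize (H3 k l Hk Hl); rewrite HRv in H3; lra.
  - intros k Hk; specialize (H4 k Hk); rewrite (sumR_one_minus L (fun l => Rv k l)) in H4; lra.
  - intros k i l Hk Hli Hi; specialize (H5 k i l Hk Hli Hi); rewrite Hxi in H5; auto; lra.
  - intros k l Hk Hl; specialize (H6 k l Hk Hl); lra.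
  - intros k Hk; specialize (H12 k Hk); rewrite (sumR_one_minus L (fun l => Rv k l)) in H12.
    rewrite <- H12; ring.
  - intros k i l Hk Hli Hi; specialize (H13 k i l Hk Hli Hi); rewrite Hxi in H13; auto.
    rewrite <- H13; ring.
  - intros k l Hk Hl; rewrite <- (H14 k l Hk Hl); ring.
Qed.

Section Reference.

Variable Pstar : Precoder.

Local Notation b0 := (fun k i l => / eps_mmse M K L h alpha Pstar k i l).

Lemma mmse_rate_gap_at_ref k i l :
  (k < K)%nat -> (l < L)%nat -> mmse_rate_gap b0 Pstar k i l = 0.
Proof.
  intros Hk Hl.
  assert (He := eps_mmse_pos k l (alpha_pos k l Hk Hl) (alpha_row_ge0 k Hk) Pstar i).
  rewrite mmse_rate_gap_eq; auto using alpha_row_ge0.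
  - rewrite Rinv_l, ln_1 by lra; ring.
  - now apply Rinv_0_lt_compat.
Qed.

Lemma xi_mmse_at_ref k i l : (k < K)%nat -> (l <= i)%nat -> (i < L)%nat ->
  xi_mmse M K L h alpha b0 Pstar k i l = 1 - rate M K L h alpha Pstar k i l.
Proof.
  intros Hk Hli Hi.
  assert (Hgap := mmse_rate_gap_at_ref k i l Hk ltac:(lia)).
  unfold mmse_rate_gap in Hgap; lra.
Qed.

Lemma lagr_g_at_ref Rv c : Lg b0 Pstar (fun k l => 1 - Rv k l) (INR L - c) = Lf Pstar Rv c + INR L.
Proof.
  rewrite lagr_g_substitution.
  assert (gap_sum b0 psi Pstar = 0) as ->; [|ring].
  apply sumR_zero; intros k Hk; apply sum_tri_zero; intros i l Hli Hi.
  rewrite mmse_rate_gap_at_ref by lia; ring.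
Qed.

Lemma Derive_lagr_g_pertP Rv c m k z : ex_derive_C z 0 -> z 0 = (0, 0) ->
  Derive (fun t => Lg b0 (pertP Pstar m k (z t)) (fun k l => 1 - Rv k l) (INR L - c)) 0
  = Derive (fun t => Lf (pertP Pstar m k (z t)) Rv c) 0.
Proof.
  intros Hz Hz0.
  erewrite Derive_ext; [| intros t; apply lagr_g_substitution].
  apply Derive_plus_flat.
  - now apply ex_derive_lagr_f_pertP.
  - now apply is_derive_gap_sum.
Qed.

Lemma dconj_lagr_g_at_ref Rv c m k :
  dconj (fun P => Lg b0 P (fun k l => 1 - Rv k l) (INR L - c)) Pstar m k
  = dconj (fun P => Lf P Rv c) Pstar m k.
Proof.
  unfold dconj; rewrite !Derive_lagr_g_pertP; auto.
  all: split; simpl; auto using ex_derive_const, ex_derive_id.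
Qed.

Lemma Derive_lagr_g_cbar Rv c :
  Derive (fun cb => Lg b0 Pstar (fun k l => 1 - Rv k l) cb) (INR L - c)
  = - Derive (fun c' => Lf Pstar Rv c') c.
Proof.
  rewrite (Derive_ext _ (fun cb => Lf Pstar Rv (INR L - cb) + INR L)).
  - rewrite (Derive_reflect (fun c' => Lf Pstar Rv c'));
      [now replace (INR L - (INR L - c)) with c by ring|].
    unfold lagr_f, sum_tri; ex_derive_poly.
  - intros cb; rewrite <- lagr_g_at_ref; f_equal; ring.
Qed.

Lemma upd2_one_minus Rv k l x :
  upd2 (fun k l => 1 - Rv k l) k l x = (fun k' l' => 1 - upd2 Rv k l (1 - x) k' l').
Proof.
  apply functional_extensionality; intro k'; apply functional_extensionality; intro l'.
  unfold upd2; destruct (andb _ _); ring.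
Qed.

Lemma Derive_lagr_g_xi Rv c k l :
  Derive (fun x => Lg b0 Pstar (upd2 (fun k l => 1 - Rv k l) k l x) (INR L - c)) (1 - Rv k l)
  = - Derive (fun y => Lf Pstar (upd2 Rv k l y) c) (Rv k l).
Proof.
  rewrite (Derive_ext _ (fun x => Lf Pstar (upd2 Rv k l (1 - x)) c + INR L)).
  - rewrite (Derive_reflect (fun y => Lf Pstar (upd2 Rv k l y) c));
      [now replace (1 - (1 - Rv k l)) with (Rv k l) by ring|].
    unfold lagr_f, sum_tri, upd2; ex_derive_poly.
  - intros x; rewrite upd2_one_minus; apply lagr_g_at_ref.
Qed.

End Reference.
End Multipliers.
End Model.

Theorem mainTheorem1
  (M K L : nat) (h : Chan) (alpha : nat -> nat -> R) (Etx : R)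
  (Rth : nat -> nat -> R) (Pstar : Precoder)
  (Halpha_pos : forall k l, (k < K)%nat -> (l < L)%nat -> 0 < alpha k l)
  (Halpha_sum : forall k, (k < K)%nat -> sumR L (fun l => alpha k l) = 1)
  (HEtx : 0 < Etx)
  (HRth : forall k l, (k < K)%nat -> (l < L)%nat -> 0 <= Rth k l) :
  let b := fun k i l => / eps_mmse M K L h alpha Pstar k i l in
  let xith := fun k l => 1 - Rth k l in
  (forall k i l, (k < K)%nat -> (l <= i)%nat -> (i < L)%nat ->
     xi_mmse M K L h alpha b Pstar k i l = 1 - rate M K L h alpha Pstar k i l) /\
  (forall (Rstar : nat -> nat -> R) (cstar : R) (mu : nat -> R)
          (kappa : nat -> nat -> R) (psi : nat -> nat -> nat -> R) (lambda : R),
     KKT1 M K L h alpha Etx Rth Pstar Rstar cstar mu kappa psi lambda <->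
     KKT2 M K L h alpha Etx b xith Pstar (fun k l => 1 - Rstar k l) (INR L - cstar)
          mu kappa psi lambda).
Proof.
  cbv zeta; split; [intros; now apply xi_mmse_at_ref |].
  intros Rstar cstar mu kappa psi lambda.
  apply KKT1_iff_KKT2; intros.
  - now apply dconj_lagr_g_at_ref.
  - now apply Derive_lagr_g_cbar.
  - now apply Derive_lagr_g_xi.
  - now apply xi_mmse_at_ref.
Qed.
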